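(* In the incremental implementation of Algorithm 2(b) below, for each receiver $j$ and each slot $t$, at the end of slot $t$: for every vector $\mathbf{u}=(u_1,\dots,u_{Q(t)})$ in the row space $U_j(t)$ of the matrix $B_j$, the linear combination $\sum_{i=1}^{Q(t)}u_i\mathbf{p}_i$ is known to receiver $j$, where $\mathbf{p}_i$ denotes the $i$-th packet in the sender's queue at the end of slot $t$ and $Q(t)$ is the queue length.
   Context: Setting: a sender broadcasts to $n$ receivers over a slotted packet erasure broadcast channel; packets are vectors over $\mathbb{F}_q$; each slot packets may arrive at the sender; the sender transmits at most one linear combination of queued packets per slot; each receiver receives it or suffers an erasure, and perfect feedback tells the sender which receivers received it. A node has seen a packet $\mathbf{p}$ if it can compute $\mathbf{p}+\mathbf{q}$ with $\mathbf{q}$ a linear combination of packets that arrived after $\mathbf{p}$. Incremental implementation of Algorithm 2(b): (1) Initialize matrices $B_1,\dots,B_n$ as empty. In each slot: (2) append the $a$ newly arrived packets to the end of the queue and append $a$ all-zero columns on the right of each $B_j$; (3) if the queue is nonempty, compute a linear combination $\mathbf{g}$ of queued packets (by a coding module) and transmit it; (4) for each receiver $j$ that received the transmission, add the coefficient vector of $\mathbf{g}$ with respect to the current queue contents as a new row of $B_j$ and perform Gaussian elimination (bringing $B_j$ to reduced row echelon form); (5) let $S_j'$ be the set of queued packets corresponding to pivot columns of $B_j$ and $S_\Delta'=\bigcap_jS_j'$; replace each $B_j$ by the submatrix obtained by deleting the columns in $S_\Delta'$ and the corresponding pivot rows; (6) drop the packets in $S_\Delta'$ from the queue. Columns of $B_j$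 are never rearranged, so column $i$ of $B_j$ corresponds to the $i$-th packet in the queue. *)

From HB Require Import structures.
From mathcomp Require Import all_boot all_order all_algebra.
Set Implicit Arguments. Unset Strict Implicit. Unset Printing Implicit Defensive.
Import GRing.Theory.
Local Open Scope ring_scope.

Section Alg2b.
Variables (F : fieldType) (n m : nat).
(* n receivers (indexed by 'I_n), packets are vectors of length m over F. *)

Definition mx_of_rows (k : nat) (B : seq (seq F)) : 'M[F]_(size B, k) :=
  \matrix_(i < size B, l < k) nth 0 (nth [::] B i) l.

Definition zero_row (r : seq F) : bool := all (fun x => x == 0) r.
Definition pivot (r : seq F) : nat := find (fun x => x != 0) r.

Definition is_rref (k : nat) (B : seq (seq F)) : Prop :=
  [/\ all (fun r => size r == k) B,
      (forall i1 i2, (i1 < i2 < size B)%N ->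
         zero_row (nth [::] B i1) -> zero_row (nth [::] B i2)),
      (forall i, (i < size B)%N -> ~~ zero_row (nth [::] B i) ->
         nth 0 (nth [::] B i) (pivot (nth [::] B i)) = 1),
      (forall i1 i2, (i1 < i2 < size B)%N ->
         ~~ zero_row (nth [::] B i1) -> ~~ zero_row (nth [::] B i2) ->
         (pivot (nth [::] B i1) < pivot (nth [::] B i2))%N) &
      (forall i i', (i < size B)%N -> (i' < size B)%N -> i != i' ->
         ~~ zero_row (nth [::] B i) ->
         nth 0 (nth [::] B i') (pivot (nth [::] B i)) = 0)].

Definition pivot_cols (B : seq (seq F)) : seq nat :=
  [seq pivot r | r <- B & ~~ zero_row r].

Definition pad_cols (a : nat) (B : seq (seq F)) : seq (seq F) :=
  [seq r ++ nseq a 0 | r <- B].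

Definition drop_idx (T : Type) (S : pred nat) (s : seq T) : seq T :=
  mask [seq ~~ S i | i <- iota 0 (size s)] s.

Definition delete_cols_rows (S : pred nat) (B : seq (seq F)) : seq (seq F) :=
  [seq drop_idx S r | r <- B & ~~ (~~ zero_row r && S (pivot r))].

Definition comb (c : seq F) (q : seq 'rV[F]_m) : 'rV[F]_m :=
  \sum_(i < size q) nth 0 c i *: nth 0 q i.

(* A receiver knows x iff x is in the span of the transmissions it received. *)
Definition known (rec : seq 'rV[F]_m) (x : 'rV[F]_m) : bool :=
  (x <= \matrix_(i < size rec) nth 0 rec i)%MS.

Record state := State {
  queue : seq 'rV[F]_m;
  Bm : 'I_n -> seq (seq F);
  recv : 'I_n -> seq 'rV[F]_m }.     (* transmissions received by j so far *)

Definition init_state : state :=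
  State [::] (fun _ => [::]) (fun _ => [::]).

(* One slot of the algorithm.  arr = arrivals, c = coefficient vector chosen by
   the coding module, R = receivers not suffering an erasure, Bg j = result of
   Gaussian elimination at receiver j (any RREF matrix with the right row space). *)
Definition slot_step (s s' : state) : Prop :=
  exists (arr : seq 'rV[F]_m) (c : seq F) (R : {set 'I_n})
         (Bg : 'I_n -> seq (seq F)),
  let q1 := queue s ++ arr in
  let B1 := fun j => pad_cols (size arr) (Bm s j) in
  let recvd := fun j => (q1 != [::]) && (j \in R) in
  let B2 := fun j => if recvd j then Bg j else B1 j in
  let S := fun i : nat => [forall j : 'I_n, i \in pivot_cols (B2 j)] in
  [/\ size c = size q1,
      (forall j, recvd j ->
         is_rref (size q1) (Bg j) /\
         (mx_of_rows (size q1) (Bg j) == mx_of_rows (size q1) (rcons (B1 j) c))%MS),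
      queue s' = drop_idx S q1,
      (forall j, Bm s' j = delete_cols_rows S (B2 j)) &
      (forall j, recv s' j =
         if recvd j then rcons (recv s j) (comb c q1) else recv s j)].

Inductive reachable : state -> Prop :=
  | reach_init : reachable init_state
  | reach_step s s' : reachable s -> slot_step s s' -> reachable s'.

End Alg2b.

(* Invariant: at the end of every slot, each row r of B_j has one entry per
   queued packet, the pivot column of every nonzero row vanishes in all other
   rows, and receiver j knows the combination of the queue with coefficients r.
   Padding with zero columns preserves it, and so does Gaussian elimination
   after a reception, since the new row is the coefficient vector of the packet
   just received.  When the packets of S'_Delta are dropped, a dropped column is
   a pivot column of B_j, so it vanishes in every row that survives the
   deletion: removing that entry and the corresponding packet does not change
   the combination.  The theorem follows because the combinations known to j
   form a subspace. *)
From mathcomp Require Import all_boot all_order all_algebra.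
Set Implicit Arguments. Unset Strict Implicit. Unset Printing Implicit Defensive.
Import GRing.Theory.
Local Open Scope ring_scope.

Section Combinations.
Variables (F : fieldType) (m : nat).
Local Notation packet := 'rV[F]_m.

Definition seq_mx (q : seq packet) : 'M[F]_(size q, m) :=
  \matrix_(i < size q) nth 0 q i.

Lemma sum_nth_seq_mx (q : seq packet) (u : 'rV[F]_(size q)) :
  \sum_(i < size q) u 0 i *: nth 0 q i = u *m seq_mx q.
Proof. by rewrite mulmx_sum_row; apply: eq_bigr => i _; rewrite rowK. Qed.

Lemma comb_seq_mx (r : seq F) (q : seq packet) :
  comb r q = (\row_(l < size q) nth 0 r l) *m seq_mx q.
Proof. by rewrite -sum_nth_seq_mx; apply: eq_bigr => i _; rewrite mxE. Qed.

Lemma comb_cons x (r : seq F) (y : packet) q :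
  comb (x :: r) (y :: q) = x *: y + comb r q.
Proof. by rewrite /comb big_ord_recl. Qed.

Lemma comb_pad (r : seq F) (q arr : seq packet) a :
  size r = size q -> comb (r ++ nseq a 0) (q ++ arr) = comb r q.
Proof.
elim: r q => [|x r IH] [|y q] //= Hs.
  by rewrite /comb big_ord0 big1 // => i _; rewrite nth_nseq if_same scale0r.
by rewrite !comb_cons IH //; case: Hs.
Qed.

Lemma known_nth (R : seq packet) i : (i < size R)%N -> known R (nth 0 R i).
Proof.
move=> Hi; have -> : nth 0 R i = row (Ordinal Hi) (seq_mx R) by rewrite rowK.
exact: row_sub.
Qed.

Lemma known_rcons (R : seq packet) y x : known R x -> known (rcons R y) x.
Proof.
move/submx_trans; apply; apply/row_subP => i; rewrite rowK.
have Hi : (i < size (rcons R y))%N by rewrite size_rcons ltnS ltnW.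
by have := known_nth Hi; rewrite nth_rcons ltn_ord.
Qed.

Lemma known_last (R : seq packet) y : known (rcons R y) y.
Proof.
have Hi : (size R < size (rcons R y))%N by rewrite size_rcons.
by have := known_nth Hi; rewrite nth_rcons ltnn eqxx.
Qed.

Lemma known_row_space (R q : seq packet) (B : seq (seq F)) (u : 'rV_(size q)) :
  (forall r, r \in B -> known R (comb r q)) ->
  (u <= mx_of_rows (size q) B)%MS -> known R (u *m seq_mx q).
Proof.
move=> HB /submxP [w ->]; rewrite -mulmxA.
apply: submx_trans (submxMl w _) _; apply/row_subP => i; rewrite row_mul.
have -> : row i (mx_of_rows (size q) B) = \row_(l < size q) nth 0 (nth [::] B i) l
  by apply/rowP => l; rewrite !mxE.
by rewrite -comb_seq_mx; apply/HB/mem_nth.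
Qed.

End Combinations.

Section IndexDeletion.
Variable S : pred nat.

(* [drop_idx S] is convertible to [drop_idx_from 0]; the offset makes it
   amenable to induction along [cons]. *)
Definition drop_idx_from (o : nat) {T : Type} (s : seq T) : seq T :=
  mask [seq ~~ S i | i <- iota o (size s)] s.

Lemma drop_idx_from_cons o T (x : T) s :
  drop_idx_from o (x :: s) =
    if ~~ S o then x :: drop_idx_from o.+1 s else drop_idx_from o.+1 s.
Proof. by []. Qed.

Lemma size_drop_idx_from o T U (s : seq T) (t : seq U) :
  size s = size t -> size (drop_idx_from o s) = size (drop_idx_from o t).
Proof.
elim: s t o => [|x s IH] [|y t] o //= [Hs].
by rewrite !drop_idx_from_cons; case: ifP => _ /=; rewrite (IH t).
Qed.

Lemma nth_drop_idx_from T (x0 : T) s o p : (p < size s)%N -> ~~ S (o + p)%N ->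
  nth x0 (drop_idx_from o s) (count (fun i => ~~ S i) (iota o p)) = nth x0 s p.
Proof.
elim: s o p => [|x s IH] o [|p] //= Hp HS.
  by rewrite addn0 in HS; rewrite drop_idx_from_cons HS.
have HS' : ~~ S (o.+1 + p)%N by rewrite addSn -addnS.
by rewrite drop_idx_from_cons; case: ifP => _ /=; rewrite ?add1n ?add0n /= IH.
Qed.

Variable F : fieldType.

Lemma zero_row_drop_idx_from o (r : seq F) :
  zero_row r -> zero_row (drop_idx_from o r).
Proof.
elim: r o => [|x r IH] o //= /andP [Hx Hr]; rewrite drop_idx_from_cons.
by case: ifP => _ /=; rewrite ?Hx IH.
Qed.

Lemma pivot_drop_idx_from o (r : seq F) :
  ~~ zero_row r -> ~~ S (o + pivot r)%N ->
  pivot (drop_idx_from o r) = count (fun i => ~~ S i) (iota o (pivot r)).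
Proof.
rewrite /zero_row -has_predC.
elim: r o => [|x r IH] o //= Hh; rewrite drop_idx_from_cons /pivot /=.
case Hx: (x != 0) => /= HS; first by rewrite addn0 in HS; rewrite HS /= Hx.
rewrite Hx /= in Hh; have HS' : ~~ S (o.+1 + pivot r)%N by rewrite addSn -addnS.
by case: ifP => _ /=; rewrite ?Hx /= -/(pivot _) IH.
Qed.

Variable m : nat.

Lemma comb_drop_idx_from o (r : seq F) (q : seq 'rV[F]_m) :
  size r = size q -> (forall p, (p < size r)%N -> S (o + p)%N -> nth 0 r p = 0) ->
  comb (drop_idx_from o r) (drop_idx_from o q) = comb r q.
Proof.
elim: r q o => [|x r IH] [|y q] o //= [Hs] Hz.
have Hz' p : (p < size r)%N -> S (o.+1 + p)%N -> nth 0 r p = 0.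
  by move=> Hp HS; apply: (Hz p.+1) => //; rewrite addnS -addSn.
rewrite !drop_idx_from_cons; case: ifP => HS; first by rewrite !comb_cons IH.
have -> : x = 0 by apply: (Hz 0%N); rewrite ?addn0 ?(negbFE HS).
by rewrite comb_cons scale0r add0r IH.
Qed.

End IndexDeletion.

Section PivotColumns.
Variable F : fieldType.

Definition rows_of_size (k : nat) (B : seq (seq F)) : bool :=
  all (fun r => size r == k) B.

(* The only part of the reduced row echelon form that the argument needs. *)
Definition pivot_cols_cleared (B : seq (seq F)) : Prop :=
  forall r r', r \in B -> r' \in B -> r != r' ->
    ~~ zero_row r -> nth 0 r' (pivot r) = 0.

Lemma rref_pivot_cols_cleared k (B : seq (seq F)) :
  is_rref k B -> pivot_cols_cleared B.
Proof.
case=> _ _ _ _ Hclear r r' Hr Hr' Hne.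
rewrite -(nth_index [::] Hr) -(nth_index [::] Hr') => Hnz.
apply: Hclear; rewrite ?index_mem //.
by apply: contraNneq Hne => Heq; rewrite -(nth_index [::] Hr) Heq nth_index.
Qed.

Lemma pivot_lt_size (r : seq F) : ~~ zero_row r -> (pivot r < size r)%N.
Proof. by rewrite /zero_row -has_predC /pivot -has_find. Qed.

Lemma pivot_pad (a : nat) (r : seq F) :
  ~~ zero_row r -> pivot (r ++ nseq a 0) = pivot r.
Proof. by rewrite /zero_row -has_predC /pivot find_cat => ->. Qed.

Lemma pivot_cols_cleared_pad a k (B : seq (seq F)) :
  rows_of_size k B -> pivot_cols_cleared B -> pivot_cols_cleared (pad_cols a B).
Proof.
move=> /allP Hsize Hclear _ _ /mapP [r Hr ->] /mapP [r' Hr' ->] Hne Hnz.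
have Hnzr : ~~ zero_row r by move: Hnz; rewrite /zero_row all_cat all_nseq eqxx orbT andbT.
have Hpr : (pivot r < size r')%N.
  by rewrite (eqP (Hsize r' Hr')) -(eqP (Hsize r Hr)); apply: pivot_lt_size.
rewrite pivot_pad // nth_cat Hpr; apply: Hclear => //.
by apply: contraNneq Hne => ->.
Qed.

Lemma pivot_cols_cleared_delete (S : pred nat) k (B : seq (seq F)) :
  rows_of_size k B -> pivot_cols_cleared B ->
  pivot_cols_cleared (delete_cols_rows S B).
Proof.
move=> /allP Hsize Hclear _ _ /mapP [r Hr ->] /mapP [r' Hr' ->] Hne Hnz.
rewrite mem_filter in Hr; rewrite mem_filter in Hr'.
case/andP: Hr => Hkept Hr; case/andP: Hr' => _ Hr'.
have Hnzr : ~~ zero_row r by apply: contra Hnz; apply: zero_row_drop_idx_from.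
rewrite Hnzr /= in Hkept.
have Hpr : (pivot r < size r')%N.
  by rewrite (eqP (Hsize r' Hr')) -(eqP (Hsize r Hr)); apply: pivot_lt_size.
rewrite /drop_idx -/(drop_idx_from S 0 r) -/(drop_idx_from S 0 r').
rewrite pivot_drop_idx_from // nth_drop_idx_from //; apply: Hclear => //.
by apply: contraNneq Hne => ->.
Qed.

End PivotColumns.

Section Invariant.
Variables (F : fieldType) (m : nat).
Local Notation packet := 'rV[F]_m.

Definition knowledge_inv (q R : seq packet) (B : seq (seq F)) : Prop :=
  [/\ rows_of_size (size q) B, pivot_cols_cleared B &
      forall r, r \in B -> known R (comb r q)].

Lemma knowledge_inv0 : knowledge_inv [::] [::] [::].
Proof. by split. Qed.

Lemma knowledge_inv_pad q R B (arr : seq packet) :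
  knowledge_inv q R B -> knowledge_inv (q ++ arr) R (pad_cols (size arr) B).
Proof.
case=> /allP Hsize Hclear Hknown; split.
- apply/allP => _ /mapP [r Hr ->].
  by rewrite !size_cat size_nseq (eqP (Hsize r Hr)).
- exact: pivot_cols_cleared_pad (introT allP Hsize) Hclear.
- by move=> _ /mapP [r Hr ->]; rewrite comb_pad ?Hknown ?(eqP (Hsize r Hr)).
Qed.

Lemma knowledge_inv_receive q R B c Bg :
  knowledge_inv q R B -> is_rref (size q) Bg ->
  (mx_of_rows (size q) Bg == mx_of_rows (size q) (rcons B c))%MS ->
  knowledge_inv q (rcons R (comb c q)) Bg.
Proof.
case=> _ _ Hknown Hrref /andP [Hsub _]; split.
- by case: Hrref.
- exact: rref_pivot_cols_cleared Hrref.
move=> r Hr; have Hi : (index r Bg < size Bg)%N by rewrite index_mem.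
have -> : comb r q = row (Ordinal Hi) (mx_of_rows (size q) Bg) *m seq_mx q.
  by rewrite comb_seq_mx; congr (_ *m _); apply/rowP => l; rewrite !mxE nth_index.
apply: (known_row_space (B := rcons B c)); last exact: submx_trans (row_sub _ _) Hsub.
move=> x; rewrite mem_rcons in_cons => /orP [/eqP -> | Hx]; first exact: known_last.
exact/known_rcons/Hknown.
Qed.

Lemma knowledge_inv_delete (S : pred nat) q R B :
  (forall i, S i -> i \in pivot_cols B) ->
  knowledge_inv q R B -> knowledge_inv (drop_idx S q) R (delete_cols_rows S B).
Proof.
move=> Hpiv [/allP Hsize Hclear Hknown]; split.
- apply/allP => _ /mapP [r Hr ->]; rewrite mem_filter in Hr; case/andP: Hr => _ Hr.
  exact/eqP/size_drop_idx_from/eqP/Hsize.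
- exact: pivot_cols_cleared_delete (introT allP Hsize) Hclear.
move=> _ /mapP [r Hr ->]; rewrite mem_filter in Hr; case/andP: Hr => Hkept Hr.
rewrite /drop_idx -/(drop_idx_from S 0 r) -/(drop_idx_from S 0 q).
rewrite comb_drop_idx_from ?Hknown ?(eqP (Hsize r Hr)) // => p _.
rewrite add0n => HSp; have /mapP [r' Hr' Hp] := Hpiv _ HSp.
rewrite mem_filter in Hr'; case/andP: Hr' => Hnz Hr'.
rewrite Hp; apply: Hclear => //; apply: contraNneq Hkept => Hr'r.
by rewrite -Hr'r Hnz -Hp.
Qed.

End Invariant.

Lemma knowledge_inv_reachable (F : fieldType) (n m : nat) (s : state F n m) :
  reachable s -> forall j, knowledge_inv (queue s) (recv s j) (Bm s j).
Proof.
elim=> [|s0 s1 _ IH [arr [c [R [Bg [_ Hgauss -> HB Hrecv]]]]]] j.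
  exact: knowledge_inv0.
rewrite HB Hrecv; apply: knowledge_inv_delete; first by move=> i /forallP.
have Hpad := knowledge_inv_pad arr (IH j).
move: (Hgauss j); case: ifP => // _ /(_ isT) [Hrref Hspan].
exact: knowledge_inv_receive Hpad Hrref Hspan.
Qed.

Theorem theorem7 (F : finFieldType) (n m : nat) (s : state F n m) :
  reachable s ->
  forall (j : 'I_n) (u : 'rV[F]_(size (queue s))),
    (u <= mx_of_rows (size (queue s)) (Bm s j))%MS ->
    known (recv s j) (\sum_(i < size (queue s)) u 0 i *: nth 0 (queue s) i).
Proof.
move=> Hs j u Hu; have [_ _ Hknown] := knowledge_inv_reachable Hs j.
by rewrite sum_nth_seq_mx; apply: known_row_space Hknown Hu.
Qed.
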